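(* Let $r_i:\mathbb{R}^n\to\mathbb{R}$, $i=1,\dots,m$, be twice continuously differentiable, $f(x)=\sum_{i=1}^m|r_i(x)|$, and for $z=(x,\mu)\in\mathbb{R}^n\times\mathbb{R}$ with $\mu\ne0$ let $$s_i(x,\mu)=\mu^2\ln\Big[\exp\Big(\tfrac{r_i(x)}{\mu^2}\Big)+\exp\Big(-\tfrac{r_i(x)}{\mu^2}\Big)\Big],\quad E(z)=\sum_{i=1}^m s_i(x,\mu),\quad E_1(z)=E(z)+\frac{\mu^2\|x\|^2}{2}.$$ Define $\partial^0E_1(z)=\{\nabla E_1(z)\}$ if $\mu\neq0$ and $\partial^0E_1(z)=\{\lim_{\mu\to0}\nabla E_1(x,\mu)\}$ if $\mu=0$, where $\nabla E_1(z)=(\nabla_x E_1(z),\partial E_1(z)/\partial\mu)$. If $0\in\partial^0E_1(z)$, then $\mu=0$ and $x$ is a stationary point of $f$. Moreover, if the $r_i$, $i=1,\dots,m$, are affine functions, then $x$ is a minimizer of $f$ over $\mathbb{R}^n$.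
   Context: A point $x$ is a stationary point of $f$ if $0\in\partial f(x)$, where $\partial f(x)=\{\sum_{i=1}^m\delta_i\nabla r_i(x)\}$ with $\delta_i=\operatorname{sign}(r_i(x))$ if $r_i(x)\neq0$ and $\delta_i\in[-1,1]$ arbitrary if $r_i(x)=0$. *)

From HB Require Import structures.
From mathcomp Require Import all_boot all_order all_algebra.
From mathcomp Require Import all_classical all_reals all_analysis.
Set Implicit Arguments. Unset Strict Implicit. Unset Printing Implicit Defensive.
Import Order.TTheory GRing.Theory Num.Theory.
Import numFieldNormedType.Exports.
Local Open Scope classical_set_scope.
Local Open Scope ring_scope.

Section Defs.
Variables (R : realType) (n m : nat).

Definition evec (j : 'I_n) : 'rV[R]_n := delta_mx 0 j.

Definition pderiv (g : 'rV[R]_n -> R) (j : 'I_n) (x : 'rV[R]_n) : R :=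
  'D_(evec j) g x.

Definition grad (g : 'rV[R]_n -> R) (x : 'rV[R]_n) : 'rV[R]_n :=
  \row_j pderiv g j x.

Definition C2 (g : 'rV[R]_n -> R) : Prop :=
  continuous g /\
  (forall j x, derivable g x (evec j)) /\
  (forall j, continuous (pderiv g j)) /\
  (forall j k x, derivable (pderiv g j) x (evec k)) /\
  (forall j k, continuous (pderiv (pderiv g j) k)).

Definition sqnorm (x : 'rV[R]_n) : R := \sum_(j < n) x 0 j ^+ 2.

Variable r : 'I_m -> 'rV[R]_n -> R.

Definition fobj (x : 'rV[R]_n) : R := \sum_(i < m) `|r i x|.

Definition s_i (i : 'I_m) (x : 'rV[R]_n) (mu : R) : R :=
  mu ^+ 2 * ln (expR (r i x / mu ^+ 2) + expR (- (r i x / mu ^+ 2))).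

Definition E (x : 'rV[R]_n) (mu : R) : R := \sum_(i < m) s_i i x mu.

Definition E1 (x : 'rV[R]_n) (mu : R) : R := E x mu + mu ^+ 2 * sqnorm x / 2.

Definition gradE1 (x : 'rV[R]_n) (mu : R) : 'rV[R]_n * R :=
  (grad (fun y => E1 y mu) x, derive1 (fun t => E1 x t) mu).

Definition subdiff0 (x : 'rV[R]_n) (mu : R) : set ('rV[R]_n * R) :=
  if mu != 0 then [set gradE1 x mu]
  else [set l | (fun t => gradE1 x t) @ 0^' --> l].

Definition stationary (x : 'rV[R]_n) : Prop :=
  exists delta : 'I_m -> R,
    (forall i, r i x != 0 -> delta i = Num.sg (r i x)) /\
    (forall i, r i x = 0 -> -1 <= delta i <= 1) /\
    \sum_(i < m) delta i *: grad (r i) x = 0.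

End Defs.

Definition affine (R : realType) (n : nat) (g : 'rV[R]_n -> R) : Prop :=
  exists (a : 'rV[R]_n) (b : R), forall x, g x = \sum_(j < n) a 0 j * x 0 j + b.

From HB Require Import structures.
From mathcomp Require Import all_boot all_order all_algebra.
From mathcomp Require Import all_classical all_reals all_analysis.
From mathcomp Require Import ring lra.
Import Order.TTheory GRing.Theory Num.Theory.
Import numFieldNormedType.Exports.
Local Open Scope classical_set_scope.
Local Open Scope ring_scope.

(* With [u := r / mu^2] each smoothing term is [s = mu^2 ln (2 cosh u)], so
   [ds/dx = tanh u * dr/dx] and [ds/dmu = 2 mu (ln (2 cosh u) - u tanh u)].
   Since [u tanh u < |u| < ln (2 cosh u)], the mu-derivative of E1 is [mu] times a
   positive number and vanishes only at [mu = 0].  As [mu -> 0], [tanh (r / mu^2)]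
   tends to [sign r] at rate [mu^2 / |r|], so the x-gradient of E1 tends to
   [sum_i sign (r_i x) grad r_i x]; its vanishing makes [delta_i = sign (r_i x)] a
   stationarity certificate.  For affine [r_i], a certificate [delta] with
   [|delta_i| <= 1] and [delta_i r_i x = |r_i x|] gives
   [f x = sum_i delta_i r_i y <= f y]. *)

Section tanh.
Context {R : realType}.

Definition ln2cosh (u : R) := ln (expR u + expR (- u)).

Definition tanh (u : R) := (expR u - expR (- u)) / (expR u + expR (- u)).

Lemma tanh0 : tanh 0 = 0.
Proof. by rewrite /tanh oppr0 subrr mul0r. Qed.

Lemma is_derive_ln2cosh (k : R -> R) (t e : R) : is_derive t 1 k e ->
  is_derive t 1 (fun h => ln2cosh (k h)) (e * tanh (k t)).
Proof.
move=> hk.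
have hexp : is_derive t 1 (expR \o k) (expR (k t) * e) by exact: is_derive1_comp.
have hexpN : is_derive t 1 (expR \o (- k)) (expR (- k t) * - e).
  by apply: is_derive1_comp; exact: is_deriveN.
have hpos : 0 < expR (k t) + expR (- k t) by rewrite addr_gt0 // expR_gt0.
have hln := @is_derive1_comp R (@ln R) _ t _ _
  (is_derive1_ln hpos) (is_deriveD hexp hexpN).
by apply: is_derive_eq hln _; rewrite /tanh; field; rewrite gt_eqF.
Qed.

Lemma mul_tanh_lt_ln2cosh (u : R) : u * tanh u < ln2cosh u.
Proof.
have hA := expR_gt0 u; have hB := expR_gt0 (- u).
rewrite /ln2cosh /tanh.
apply: (@le_lt_trans _ _ `|u|).
  rewrite mulrA ler_pdivrMr; last by lra.
  by case: (lerP 0 u) => hu; [rewrite ger0_norm | rewrite ltr0_norm]; nra.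
rewrite -[X in X < _]expRK ltr_ln ?posrE ?addr_gt0 ?expR_gt0 //.
by case: (lerP 0 u) => hu; [rewrite ger0_norm | rewrite ltr0_norm]; lra.
Qed.

Lemma tanh_sg_dist_le (u : R) : u != 0 -> `|tanh u - Num.sg u| * `|u| <= 1.
Proof.
move=> u0.
have hA := expR_gt0 u; have hB := expR_gt0 (- u).
have hA1 := expR_ge1Dx u; have hB1 := expR_ge1Dx (- u).
have hAB : expR u * expR (- u) = 1 by rewrite -expRD subrr expR0.
move: hA hB hA1 hB1 hAB; rewrite /tanh.
set A := expR u; set B := expR (- u) => hA hB hA1 hB1 hAB.
have -> : (A - B) / (A + B) - Num.sg u = (A - B - Num.sg u * (A + B)) / (A + B).
  by field; lra.
rewrite normrM normfV (gtr0_norm (_ : 0 < A + B)); last by lra.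
rewrite mulrAC ler_pdivrMr ?mul1r; last by lra.
case: (ltrgt0P u) u0 => hu // _.
  rewrite gtr0_sg // mul1r.
  have -> : A - B - (A + B) = - (2 * B) by ring.
  by rewrite normrN gtr0_norm; nra.
rewrite ltr0_sg // mulN1r.
have -> : A - B - - (A + B) = 2 * A by ring.
by rewrite gtr0_norm; nra.
Qed.

(* No hypothesis [a != 0] is needed: both sides vanish at [a = 0] since [0^-1 = 0]. *)
Lemma tanh_scaled_sg_le (a t : R) : t != 0 ->
  `|tanh (a / t ^+ 2) - Num.sg a| <= t ^+ 2 / `|a|.
Proof.
move=> t0; have t2 : 0 < t ^+ 2 by rewrite exprn_even_gt0.
have [->|a0] := eqVneq a 0; first by rewrite mul0r tanh0 sgr0 subrr !normr0 invr0 mulr0.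
have u0 : a / t ^+ 2 != 0 by rewrite mulf_neq0 // invr_eq0 gt_eqF.
have := tanh_sg_dist_le _ u0.
rewrite sgrM sgrV (gtr0_sg t2) mulr1 normrM normfV (gtr0_norm t2).
have na : `|a| != 0 by rewrite normr_eq0.
move=> h; rewrite -(ler_pM2r (_ : 0 < `|a| / t ^+ 2)) ?divr_gt0 ?normr_gt0 //.
have -> : t ^+ 2 / `|a| * (`|a| / t ^+ 2) = 1 by field; rewrite t0 na.
exact: h.
Qed.

Lemma sum_tanh_sg_le (m : nat) (d a : 'I_m -> R) (c t : R) : t != 0 ->
  `|(\sum_(i < m) d i * tanh (a i / t ^+ 2) + t ^+ 2 * c)
      - \sum_(i < m) Num.sg (a i) * d i|
  <= t ^+ 2 * (\sum_(i < m) `|d i| / `|a i| + `|c|).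
Proof.
move=> t0.
have -> : (\sum_(i < m) d i * tanh (a i / t ^+ 2) + t ^+ 2 * c)
    - \sum_(i < m) Num.sg (a i) * d i
  = \sum_(i < m) d i * (tanh (a i / t ^+ 2) - Num.sg (a i)) + t ^+ 2 * c.
  rewrite addrAC -sumrB; congr (_ + _); apply: eq_bigr => i _.
  by rewrite mulrBr (mulrC (Num.sg _)).
rewrite mulrDr mulr_sumr (le_trans (ler_normD _ _)) // lerD //.
  rewrite (le_trans (ler_norm_sum _ _ _)) // ler_sum // => i _.
  rewrite normrM mulrCA ler_wpM2l //; exact: tanh_scaled_sg_le.
by rewrite normrM ger0_norm // exprn_even_ge0.
Qed.

End tanh.

Section line_derivative.
Context {R : numFieldType} {V W : normedModType R}.

Lemma derive_along_line (f : V -> W) (x v : V) :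
  'D_v f x = 'D_1 (fun h : R => f (h *: v + x)) 0.
Proof.
rewrite /derive; set g1 := fun h => h^-1 *: _; set g2 := fun h => h^-1 *: _.
suff -> : g1 = g2 by [].
by apply/funext => h; rewrite /g1 /g2 /= addr0 scale0r add0r [_%:A]mulr1.
Qed.

Lemma is_derive_alongP (f : V -> W) (x v : V) (d : W) :
  is_derive x v f d <-> is_derive (0 : R) (1 : R) (fun h : R => f (h *: v + x)) d.
Proof.
split=> -[fd fdE]; apply: DeriveDef.
- exact/(derivable1P f x v).
- by rewrite -derive_along_line.
- exact/(derivable1P f x v).
- by rewrite derive_along_line.
Qed.

End line_derivative.

Section real_derivative.
Context {R : realType}.

Lemma eq_is_derive (f g : R -> R) (x v d : R) :
  f =1 g -> is_derive x v f d -> is_derive x v g d.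
Proof. by move=> /funext ->. Qed.

Lemma is_derive_quadratic0 (a b c : R) :
  is_derive (0 : R) (1 : R) (fun h : R => a + b * h + c * h ^+ 2) b.
Proof.
have hb := is_deriveZ b (is_derive_id (0 : R) 1).
have hc := is_deriveZ c (is_deriveX 2 (is_derive_id (0 : R) 1)).
have hsum := is_deriveD (is_deriveD (is_derive_cst a (0 : R) (1 : R)) hb) hc.
apply: eq_is_derive _ (is_derive_eq hsum _) => [h|].
  by rewrite /GRing.scale /= expr2.
by rewrite /GRing.scale /=; lra.
Qed.

Lemma is_derive_sqr (t : R) : is_derive t 1 (fun s : R => s ^+ 2) (2 * t).
Proof.
apply: eq_is_derive (is_derive_eq (is_deriveX 2 (is_derive_id t 1)) _) => //.
by rewrite /GRing.scale /= mulr1 expr1.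
Qed.

Lemma is_derive_smoothing (a t : R) : t != 0 ->
  is_derive t 1 (fun s : R => s ^+ 2 * ln2cosh (a / s ^+ 2))
    (2 * t * (ln2cosh (a / t ^+ 2) - a / t ^+ 2 * tanh (a / t ^+ 2))).
Proof.
move=> t0; have t20 : t ^+ 2 != 0 by rewrite expf_neq0.
have hinv := is_deriveZ a
  (@is_deriveV R (fun s : R => s ^+ 2) t _ 1 t20 (is_derive_sqr t)).
have hM := is_deriveM (is_derive_sqr t) (is_derive_ln2cosh _ _ _ hinv).
apply: eq_is_derive _ (is_derive_eq hM _) => [h|]; first by rewrite !fctE.
by rewrite /ln2cosh /GRing.scale /=; field.
Qed.

End real_derivative.

Section row_shift.
Context {R : realType} {n : nat}.

Lemma sqnorm_shift_evec (x : 'rV[R]_n) (j : 'I_n) (h : R) :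
  sqnorm (h *: evec R j + x) = sqnorm x + 2 * x 0 j * h + h ^+ 2.
Proof.
rewrite /sqnorm (eq_bigr (fun k =>
  x 0 k ^+ 2 + if k == j then 2 * x 0 j * h + h ^+ 2 else 0)).
  by rewrite big_split /= -big_mkcond /= big_pred1_eq addrA.
move=> k _; rewrite !mxE /=.
by case: (eqVneq k j) => [->|_]; rewrite ?mulr1 ?mulr0 ?add0r ?addr0 //; ring.
Qed.

Lemma sum_mul_shift_evec (a x : 'rV[R]_n) (j : 'I_n) (h : R) :
  \sum_(k < n) a 0 k * (h *: evec R j + x) 0 k
  = \sum_(k < n) a 0 k * x 0 k + a 0 j * h.
Proof.
rewrite (eq_bigr (fun k => a 0 k * x 0 k + if k == j then a 0 j * h else 0)).
  by rewrite big_split /= -big_mkcond /= big_pred1_eq.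
move=> k _; rewrite !mxE /=.
by case: (eqVneq k j) => [->|_]; rewrite ?mulr1 ?mulr0 ?add0r ?addr0 //; ring.
Qed.

Lemma normr_fst_entry_le (M : 'rV[R]_n) (s : R) (j : 'I_n) : `|M 0 j| <= `|(M, s)|.
Proof.
rewrite prod_normE le_max; apply/orP; left.
change (`|M 0 j| <= mx_norm M); rewrite mx_normrE.
exact: (le_bigmax 0 (fun ij : 'I_1 * 'I_n => `|M ij.1 ij.2|) (0, j)).
Qed.

End row_shift.

Lemma cvgr0_norm_bound (R : realFieldType) (T : Type) (F : set_system T)
  (FF : Filter F) (f g : T -> R) :
  (\forall t \near F, `|f t| <= g t) -> g @ F --> 0 -> f @ F --> 0.
Proof.
move=> fg g0; apply: (@norm_cvg0 _ _ _ _ FF f).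
apply: (@squeeze_cvgr _ _ _ _ (fun=> 0) g) => //; last exact: cvg_cst.
by apply: filterS fg => t ->; rewrite normr_ge0.
Qed.

Section affine.
Context {R : realType} {n : nat}.

Lemma affine_pderiv (g : 'rV[R]_n -> R) (a : 'rV[R]_n) (b : R) :
  (forall x, g x = \sum_(k < n) a 0 k * x 0 k + b) ->
  forall x j, pderiv g j x = a 0 j.
Proof.
move=> gE x j; rewrite /pderiv; apply: derive_val; apply/is_derive_alongP.
have hQ := is_derive_quadratic0 (\sum_(k < n) a 0 k * x 0 k + b) (a 0 j) 0.
apply: eq_is_derive hQ => h.
by rewrite gE sum_mul_shift_evec; ring.
Qed.

Lemma affine_sub (g : 'rV[R]_n -> R) : affine g ->
  forall x y, g y - g x = \sum_(k < n) pderiv g k x * (y 0 k - x 0 k).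
Proof.
case=> a [b gE] x y.
under eq_bigr => k _ do rewrite (affine_pderiv _ _ _ gE) mulrBr.
by rewrite sumrB !gE opprD addrACA subrr addr0.
Qed.

End affine.

Section smoothing.
Context {R : realType} {n m : nat}.
Variable r : 'I_m -> 'rV[R]_n -> R.

Lemma pderiv_E1 (x : 'rV[R]_n) (t : R) (j : 'I_n) :
  t != 0 -> (forall i, derivable (r i) x (evec R j)) ->
  pderiv (fun y => E1 r y t) j x =
  \sum_(i < m) pderiv (r i) j x * tanh (r i x / t ^+ 2) + t ^+ 2 * x 0 j.
Proof.
move=> t0 hd; have t20 : t ^+ 2 != 0 by rewrite expf_neq0.
rewrite /pderiv; apply: derive_val; apply/is_derive_alongP.
have hs i : is_derive (0 : R) (1 : R) (fun h : R => s_i r i (h *: evec R j + x) t)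
    (pderiv (r i) j x * tanh (r i x / t ^+ 2)).
  have hri := (is_derive_alongP _ _ _ _).1 (derivableP (hd i)).
  have hM := is_deriveZ (t ^+ 2)
    (is_derive_ln2cosh _ _ _ (is_deriveZ (t ^+ 2)^-1 hri)).
  apply: eq_is_derive _ (is_derive_eq hM _) => [h|].
    by rewrite /s_i /ln2cosh; congr (_ * ln (expR _ + expR (- _))); exact: mulrC.
  rewrite /GRing.scale /=.
  have -> : scalemx 0 (evec R j) = 0 by apply/matrixP => a b; rewrite !mxE mul0r.
  rewrite add0r /pderiv.
  have -> : t ^- 2 *: r i x = r i x / t ^+ 2 by rewrite mulrC.
  by rewrite mulrA mulrA mulfV // mul1r.
have hQ := is_derive_quadratic0 (t ^+ 2 * sqnorm x / 2) (t ^+ 2 * x 0 j) (t ^+ 2 / 2).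
apply: eq_is_derive (is_deriveD (is_derive_sum hs) hQ) => h.
by rewrite fct_sumE /E1 /E !fctE /= sqnorm_shift_evec; field.
Qed.

Lemma derive1_E1 (x : 'rV[R]_n) (t : R) : t != 0 ->
  derive1 (fun s => E1 r x s) t =
  t * (\sum_(i < m) 2 * (ln2cosh (r i x / t ^+ 2)
                           - r i x / t ^+ 2 * tanh (r i x / t ^+ 2))
       + sqnorm x).
Proof.
move=> t0; rewrite derive1E; apply: derive_val.
have hS := is_derive_sum (fun i => is_derive_smoothing (r i x) _ t0).
have hQ := is_deriveZ (sqnorm x / 2) (is_derive_sqr t).
apply: eq_is_derive _ (is_derive_eq (is_deriveD hS hQ) _) => [h|].
  by rewrite fct_sumE /E1 /E !fctE /= /s_i /GRing.scale /= mulrC mulrA.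
rewrite /GRing.scale /= mulrDr mulr_sumr; congr (_ + _); last by field.
by apply: eq_bigr => i _; ring.
Qed.

Lemma derive1_E1_neq0 (x : 'rV[R]_n) (t : R) : (0 < m)%N -> t != 0 ->
  derive1 (fun s => E1 r x s) t != 0.
Proof.
move=> m0 t0; rewrite derive1_E1 // mulf_neq0 // gt_eqF // ltr_wpDr //.
  by rewrite /sqnorm sumr_ge0 // => k _; rewrite sqr_ge0.
have term_gt0 (u : R) : 0 < 2 * (ln2cosh u - u * tanh u).
  by rewrite mulr_gt0 // subr_gt0 mul_tanh_lt_ln2cosh.
rewrite (bigD1 (Ordinal m0)) //= ltr_pwDl ?term_gt0 // sumr_ge0 // => i _.
exact: ltW.
Qed.

Lemma cvg_pderiv_E1 (x : 'rV[R]_n) (j : 'I_n) :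
  (forall i, derivable (r i) x (evec R j)) ->
  (fun t => pderiv (fun y => E1 r y t) j x) @ 0^' -->
  \sum_(i < m) Num.sg (r i x) * pderiv (r i) j x.
Proof.
move=> hd; set K := \sum_(i < m) `|pderiv (r i) j x| / `|r i x| + `|x 0 j|.
apply/subr_cvg0; apply: (@cvgr0_norm_bound _ _ _ _ _ (fun t => t ^+ 2 * K)).
  near=> t; have t0 : t != 0 by near: t; exact: nbhs_dnbhs_neq.
  by rewrite pderiv_E1 //; exact: sum_tanh_sg_le.
apply: (@cvg_to_0_linear _ _ `|K| 1) => // t /andP [_ t1].
rewrite normrM normrX mulrC ler_wpM2l // expr2 ler_piMr //; exact: ltW.
Unshelve. all: by end_near.
Qed.

Lemma stationary_sg (x : 'rV[R]_n) :
  (forall j, \sum_(i < m) Num.sg (r i x) * pderiv (r i) j x = 0) -> stationary r x.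
Proof.
move=> hsg; exists (fun i => Num.sg (r i x)); split=> //; split.
  by move=> i ->; rewrite sgr0 lerN10 ler01.
apply/rowP => j; rewrite summxE !mxE -[RHS](hsg j).
by apply: eq_bigr => i _; rewrite !mxE.
Qed.

Lemma stationary_affine_le (x y : 'rV[R]_n) :
  (forall i, affine (r i)) -> stationary r x -> fobj r x <= fobj r y.
Proof.
move=> haff [delta [dsg [d0 dgrad]]].
have hdelta i : `|delta i| <= 1 /\ delta i * r i x = `|r i x|.
  have [rx0|rxn0] := eqVneq (r i x) 0.
    by rewrite rx0 normr0 mulr0 ler_norml; have := d0 i rx0.
  by rewrite dsg // normr_sg rxn0 -normrEsg.
have hgrad k : \sum_(i < m) delta i * pderiv (r i) k x = 0.
  rewrite -[RHS](_ : (\sum_(i < m) delta i *: grad (r i) x) 0 k = 0); last first.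
    by rewrite dgrad mxE.
  by rewrite summxE; apply: eq_bigr => i _; rewrite !mxE.
have -> : fobj r x = \sum_(i < m) delta i * r i y.
  apply/eqP; rewrite eq_sym -subr_eq0 -sumrB.
  rewrite (eq_bigr (fun i => delta i * (r i y - r i x))); last first.
    by move=> i _; rewrite mulrBr (hdelta i).2.
  under eq_bigr => i _ do rewrite (affine_sub _ (haff i)) mulr_sumr.
  rewrite exchange_big /=; apply/eqP/big1 => k _.
  under eq_bigr => i _ do rewrite mulrA.
  by rewrite -mulr_suml hgrad mul0r.
apply: ler_sum => i _; rewrite (le_trans (ler_norm _)) // normrM.
by rewrite -[X in _ <= X]mul1r ler_wpM2r // (hdelta i).1.
Qed.

End smoothing.

Theorem theorem1 (R : realType) (n m : nat) (hm : (0 < m)%N)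
  (r : 'I_m -> 'rV[R]_n -> R) (hr : forall i, C2 (r i))
  (x : 'rV[R]_n) (mu : R) :
  subdiff0 r x mu 0 ->
  mu = 0 /\ stationary r x /\
  ((forall i, affine (r i)) -> forall y, fobj r x <= fobj r y).
Proof.
move=> H.
have hd i j : derivable (r i) x (evec R j) by case: (hr i) => _ [+ _]; apply.
have mu0 : mu = 0.
  apply/eqP; apply: contraT => mu0; move: H; rewrite /subdiff0 mu0 /= => H.
  have := derive1_E1_neq0 r x mu hm mu0.
  by rewrite -[derive1 _ _]/((gradE1 r x mu).2) -H eqxx.
subst mu; move: H; rewrite /subdiff0 eqxx /= => H.
have hsg j : \sum_(i < m) Num.sg (r i x) * pderiv (r i) j x = 0.
  have hE1 : (fun t => pderiv (fun y => E1 r y t) j x) @ 0^' --> 0.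
    apply: (@cvgr0_norm_bound _ _ _ _ _ (fun t => `|gradE1 r x t|)).
      near=> t; have := normr_fst_entry_le (gradE1 r x t).1 (gradE1 r x t).2 j.
      by rewrite -surjective_pairing mxE.
    by have := cvg_norm H; rewrite normr0; apply.
  exact: (cvg_unique (@Rhausdorff R) (cvg_pderiv_E1 r x j (hd^~ j)) hE1).
have st := stationary_sg r x hsg.
by split=> //; split=> // haff y; exact: stationary_affine_le.
Unshelve. all: by end_near.
Qed.
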